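(* Let $G$ be a countable discrete group acting amenably by homeomorphisms on the Cantor space $D^{\aleph_0}=\{0,1\}^{\mathbb N}$. Then there exists a sequence of continuous maps $b^n\colon D^{\aleph_0}\to\mathbb P(G)$, each with finite image, such that for every $g\in G$, $\lim_{n\to\infty}\sup_{x\in D^{\aleph_0}}\|g b^n_x-b^n_{gx}\|_1=0$.
   Context: $\mathbb P(G)=\{b\colon G\to[0,1] : \sum_{g}b(g)=1\}\subset\ell^1(G)$ with the weak* topology and action $(gb)(h)=b(g^{-1}h)$. An action of $G$ on a compact space $X$ is amenable if there is a sequence of continuous maps $b^n\colon X\to\mathbb P(G)$ such that for every $g\in G$, $\lim_{n}\sup_{x\in X}\|g b^n_x-b^n_{gx}\|_1=0$. *)

From Stdlib Require Import Reals List.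
Import ListNotations.
Open Scope R_scope.

Definition is_group {G : Type} (mul : G -> G -> G) (inv : G -> G) (e : G) : Prop :=
  (forall a b c, mul (mul a b) c = mul a (mul b c)) /\
  (forall a, mul e a = a) /\ (forall a, mul a e = a) /\
  (forall a, mul (inv a) a = e) /\ (forall a, mul a (inv a) = e).

Definition countable (G : Type) : Prop :=
  exists enum : nat -> G, forall g, exists n, enum n = g.

Definition Cantor := nat -> bool.

Definition agree_upto (M : nat) (x y : Cantor) : Prop :=
  forall i, (i < M)%nat -> x i = y i.

Definition cantor_continuous (f : Cantor -> Cantor) : Prop :=
  forall x N, exists M, forall y, agree_upto M x y -> agree_upto N (f x) (f y).

Definition is_action {G : Type} (mul : G -> G -> G) (e : G)
  (act : G -> Cantor -> Cantor) : Prop :=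
  (forall x, act e x = x) /\
  (forall g h x, act (mul g h) x = act g (act h x)) /\
  (forall g, cantor_continuous (act g)).

Fixpoint sum_list {G : Type} (f : G -> R) (l : list G) : R :=
  match l with [] => 0 | a :: l' => f a + sum_list f l' end.

(* f is (unconditionally) summable over G with sum s *)
Definition has_sum {G : Type} (f : G -> R) (s : R) : Prop :=
  forall eps, eps > 0 -> exists l0 : list G, NoDup l0 /\
    forall l, NoDup l -> incl l0 l -> Rabs (sum_list f l - s) < eps.

Definition l1norm_le {G : Type} (f : G -> R) (c : R) : Prop :=
  forall l : list G, NoDup l -> sum_list (fun g => Rabs (f g)) l <= c.

Definition in_PG {G : Type} (b : G -> R) : Prop :=
  (forall g, 0 <= b g /\ b g <= 1) /\ has_sum b 1.

(* c_0(G): functions vanishing at infinity (predual of l^1(G)) *)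
Definition in_c0 {G : Type} (f : G -> R) : Prop :=
  forall eps, eps > 0 -> exists l : list G,
    forall g, ~ In g l -> Rabs (f g) < eps.

(* continuity of b : Cantor -> l^1(G) for the weak* topology sigma(l^1, c_0):
   for every f in c_0, x |-> <f, b_x> = sum_g f g * b_x g is continuous *)
Definition weakstar_continuous {G : Type} (b : Cantor -> G -> R) : Prop :=
  forall f : G -> R, in_c0 f ->
  forall x eps, eps > 0 -> exists M, forall y, agree_upto M x y ->
    forall s t, has_sum (fun g => f g * b x g) s ->
                has_sum (fun g => f g * b y g) t -> Rabs (s - t) < eps.

Definition translate {G : Type} (mul : G -> G -> G) (inv : G -> G)
  (g : G) (b : G -> R) : G -> R := fun h => b (mul (inv g) h).

Definition asymptotically_invariant {G : Type} (mul : G -> G -> G) (inv : G -> G)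
  (act : G -> Cantor -> Cantor) (b : nat -> Cantor -> G -> R) : Prop :=
  forall g eps, eps > 0 -> exists N, forall n, (n >= N)%nat -> forall x,
    l1norm_le (fun h => translate mul inv g (b n x) h - b n (act g x) h) eps.

Definition amenable_action {G : Type} (mul : G -> G -> G) (inv : G -> G)
  (act : G -> Cantor -> Cantor) : Prop :=
  exists b : nat -> Cantor -> G -> R,
    (forall n x, in_PG (b n x)) /\
    (forall n, weakstar_continuous (b n)) /\
    asymptotically_invariant mul inv act b.

Definition finite_image {G : Type} (c : Cantor -> G -> R) : Prop :=
  exists L : list (G -> R), forall x, exists f, In f L /\ forall g, c x g = f g.

From Stdlib Require Import Reals List Permutation FinFun Lra Lia.
From Stdlib Require Import Classical ClassicalEpsilon FunctionalExtensionality.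
Import ListNotations.
Open Scope R_scope.

(* Let b^n be the maps witnessing amenability.  The proof rests on two facts.
   (1) On P(G) the weak* topology and the l^1-norm topology agree: if b is
       weak*-continuous with values in P(G), then it is l^1-continuous.  Indeed
       b_x carries all but delta of its mass on a finite set F; on F the
       coordinates are controlled one by one, and off F both b_x and b_y have
       small mass.
   (2) The Cantor space is compact (proved directly by a Koenig's-lemma
       argument), so b^n is uniformly l^1-continuous: there is M_n such that
       points agreeing on their first M_n coordinates have images within
       1/(n+1).
   Setting c^n_x := b^n evaluated at x with all coordinates beyond M_n zeroed,
   each c^n is locally constant (hence weak*-continuous) with finitely many
   values, and is uniformly 1/(n+1)-close to b^n.  Since translation by g is an
   l^1-isometry, the triangle inequality transfers the asymptotic invariance of
   (b^n) to (c^n). *)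

Section FiniteSums.
Context {G : Type}.

Definition eq_dec_classical (x y : G) : {x = y} + {x <> y} :=
  excluded_middle_informative (x = y).

Definition memb (A : list G) (g : G) : bool :=
  if in_dec eq_dec_classical g A then true else false.

Definition indicator (A : list G) (g : G) : R := if memb A g then 1 else 0.

Lemma memb_spec A g : memb A g = true <-> In g A.
Proof. unfold memb; destruct (in_dec _ g A); split; auto; discriminate. Qed.

Lemma sum_list_app (f : G -> R) l1 l2 :
  sum_list f (l1 ++ l2) = sum_list f l1 + sum_list f l2.
Proof. induction l1; simpl; [lra | rewrite IHl1; lra]. Qed.

Lemma sum_list_plus (f f' : G -> R) l :
  sum_list (fun g => f g + f' g) l = sum_list f l + sum_list f' l.
Proof. induction l; simpl; [lra | rewrite IHl; lra]. Qed.

Lemma sum_list_map (f : G -> R) (k : G -> G) l :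
  sum_list f (map k l) = sum_list (fun h => f (k h)) l.
Proof. induction l; simpl; [lra | rewrite IHl; lra]. Qed.

Lemma sum_list_le (f f' : G -> R) l :
  (forall g, In g l -> f g <= f' g) -> sum_list f l <= sum_list f' l.
Proof.
  induction l as [|a l IH]; simpl; intros H; [lra|].
  assert (f a <= f' a) by (apply H; simpl; auto).
  assert (sum_list f l <= sum_list f' l) by (apply IH; intros; apply H; simpl; auto).
  lra.
Qed.

Lemma sum_list_ext (f f' : G -> R) l :
  (forall g, In g l -> f g = f' g) -> sum_list f l = sum_list f' l.
Proof.
  intros H; apply Rle_antisym; apply sum_list_le; intros g Hg; rewrite (H g Hg); lra.
Qed.

Lemma sum_list_zero (f : G -> R) l :
  (forall g, In g l -> f g = 0) -> sum_list f l = 0.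
Proof.
  induction l as [|a l IH]; simpl; intros H; [lra|].
  rewrite H, IH; [lra | intros; apply H |]; simpl; auto.
Qed.

Lemma sum_list_nonneg (f : G -> R) l :
  (forall g, 0 <= f g) -> 0 <= sum_list f l.
Proof. intros H; induction l as [|a l IH]; simpl; [lra | specialize (H a); lra]. Qed.

Lemma sum_list_bound (f : G -> R) c l :
  (forall g, In g l -> f g <= c) -> sum_list f l <= INR (length l) * c.
Proof.
  induction l as [|a l IH]; intros H; [simpl; lra|].
  change (length (a :: l)) with (S (length l)); rewrite S_INR; simpl sum_list.
  assert (f a <= c) by (apply H; simpl; auto).
  assert (sum_list f l <= INR (length l) * c) by (apply IH; intros; apply H; simpl; auto).
  lra.
Qed.

Lemma sum_list_perm (f : G -> R) l l' :
  Permutation l l' -> sum_list f l = sum_list f l'.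
Proof. induction 1; simpl; lra. Qed.

Lemma sum_list_filter (f : G -> R) (p : G -> bool) l :
  sum_list f l = sum_list f (filter p l) + sum_list f (filter (fun g => negb (p g)) l).
Proof. induction l; simpl; [lra|]. destruct (p a); simpl; rewrite IHl; lra. Qed.

Lemma sum_list_remove_le (f : G -> R) a l :
  (forall g, 0 <= f g) -> sum_list f (remove eq_dec_classical a l) <= sum_list f l.
Proof.
  intros Hf; induction l as [|c l IH]; simpl; [lra|].
  destruct (eq_dec_classical a c); simpl; specialize (Hf c); lra.
Qed.

Lemma sum_list_remove (f : G -> R) a l :
  (forall g, 0 <= f g) -> In a l -> f a + sum_list f (remove eq_dec_classical a l) <= sum_list f l.
Proof.
  intros Hf; induction l as [|c l IH]; simpl; [tauto|]. intros [E | I].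
  - subst; destruct (eq_dec_classical a a); [|congruence].
    pose proof (sum_list_remove_le f a l Hf); lra.
  - destruct (eq_dec_classical a c) as [->|Hne].
    + pose proof (sum_list_remove_le f c l Hf); specialize (Hf c); lra.
    + simpl; specialize (IH I); lra.
Qed.

Lemma sum_list_incl (f : G -> R) l1 l2 :
  (forall g, 0 <= f g) -> NoDup l1 -> incl l1 l2 -> sum_list f l1 <= sum_list f l2.
Proof.
  intros Hf; revert l2; induction l1 as [|a l1 IH]; intros l2 ND Inc; simpl.
  - apply sum_list_nonneg; auto.
  - apply NoDup_cons_iff in ND as [Na ND].
    pose proof (sum_list_remove f a l2 Hf (Inc a (or_introl eq_refl))).
    assert (sum_list f l1 <= sum_list f (remove eq_dec_classical a l2)).
    { apply IH; auto. intros g Hg; apply in_in_remove.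
      - intros ->; auto.
      - apply Inc; simpl; auto. }
    lra.
Qed.

(* Any two finite duplicate-free sets have a common finite duplicate-free
   superset; this is the directedness of the net of finite subsets of G. *)
Lemma NoDup_common_extension (l0 l1 : list G) :
  NoDup l0 -> NoDup l1 -> exists l, NoDup l /\ incl l0 l /\ incl l1 l.
Proof.
  intros N0 N1. exists (l0 ++ filter (fun g => negb (memb l0 g)) l1). repeat split.
  - apply NoDup_app; auto using NoDup_filter.
    intros a Ha Hb; apply filter_In in Hb as [_ Hb].
    apply memb_spec in Ha; rewrite Ha in Hb; discriminate.
  - intros g Hg; apply in_or_app; auto.
  - intros g Hg; apply in_or_app. destruct (memb l0 g) eqn:E.
    + left; apply memb_spec; auto.
    + right; apply filter_In; rewrite E; auto.
Qed.

End FiniteSums.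

Section UnorderedSums.
Context {G : Type}.

Lemma has_sum_unique (f : G -> R) s t : has_sum f s -> has_sum f t -> s = t.
Proof.
  intros Hs Ht. destruct (Req_dec s t) as [|Hne]; auto. exfalso.
  assert (P : Rabs (s - t) / 2 > 0) by (apply Rdiv_lt_0_compat; [apply Rabs_pos_lt; lra | lra]).
  destruct (Hs _ P) as [l0 [N0 H0]], (Ht _ P) as [l1 [N1 H1]].
  destruct (NoDup_common_extension l0 l1 N0 N1) as [l [N [I0 I1]]].
  specialize (H0 l N I0); specialize (H1 l N I1).
  pose proof (Rabs_triang (sum_list f l - t) (s - sum_list f l)) as T.
  replace (sum_list f l - t + (s - sum_list f l)) with (s - t) in T by ring.
  rewrite Rabs_minus_sym in H0. lra.
Qed.

Lemma has_sum_finite_support (f : G -> R) (A : list G) :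
  NoDup A -> (forall g, ~ In g A -> f g = 0) -> has_sum f (sum_list f A).
Proof.
  intros NA Hf eps Heps. exists A; split; auto. intros l N I.
  rewrite (sum_list_filter f (memb A) l).
  assert (Hin : sum_list f (filter (memb A) l) = sum_list f A).
  { apply sum_list_perm, NoDup_Permutation; auto using NoDup_filter.
    intro g; rewrite filter_In, memb_spec; intuition. }
  assert (Hout : sum_list f (filter (fun g => negb (memb A g)) l) = 0).
  { apply sum_list_zero; intros g Hg; apply filter_In in Hg as [_ Hg].
    apply Hf; rewrite <- memb_spec; destruct (memb A g); simpl in *; congruence. }
  rewrite Hin, Hout, Rplus_0_r, Rminus_diag, Rabs_R0; lra.
Qed.

Lemma indicator_in_c0 (A : list G) : in_c0 (indicator A).
Proof.
  intros eps He. exists A. intros g Hg. unfold indicator.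
  destruct (memb A g) eqn:E; [apply memb_spec in E; contradiction|].
  rewrite Rabs_R0; lra.
Qed.

Lemma indicator_has_sum (A : list G) (q : G -> R) :
  NoDup A -> has_sum (fun h => indicator A h * q h) (sum_list q A).
Proof.
  intros NA.
  replace (sum_list q A) with (sum_list (fun h => indicator A h * q h) A).
  - apply has_sum_finite_support; auto. intros g Hg; unfold indicator.
    destruct (memb A g) eqn:E; [apply memb_spec in E; contradiction | ring].
  - apply sum_list_ext; intros g Hg; unfold indicator.
    apply memb_spec in Hg; rewrite Hg; ring.
Qed.

Lemma PG_partial_sum_le1 (b : G -> R) l : in_PG b -> NoDup l -> sum_list b l <= 1.
Proof.
  intros [Hb Hs] ND. apply Rnot_lt_le; intro Hlt.
  destruct (Hs ((sum_list b l - 1) / 2)) as [l0 [N0 H0]]; [lra|].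
  destruct (NoDup_common_extension l l0 ND N0) as [l' [N' [I1 I2]]].
  specialize (H0 l' N' I2).
  assert (sum_list b l <= sum_list b l') by (apply sum_list_incl; auto; intros; apply Hb).
  apply Rabs_def2 in H0. lra.
Qed.

End UnorderedSums.

Section L1Norm.
Context {G : Type}.

Lemma l1norm_le_sym (u v : G -> R) c :
  l1norm_le (fun h => u h - v h) c -> l1norm_le (fun h => v h - u h) c.
Proof.
  intros H l N. rewrite (sum_list_ext _ (fun h => Rabs (u h - v h))); auto.
  intros g _; apply Rabs_minus_sym.
Qed.

Lemma l1norm_le_triangle (u v w : G -> R) c1 c2 :
  l1norm_le (fun h => u h - v h) c1 -> l1norm_le (fun h => v h - w h) c2 ->
  l1norm_le (fun h => u h - w h) (c1 + c2).
Proof.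
  intros H1 H2 l N. specialize (H1 l N); specialize (H2 l N).
  eapply Rle_trans; [|apply Rplus_le_compat; [exact H1 | exact H2]].
  rewrite <- sum_list_plus; apply sum_list_le; intros g _.
  replace (u g - w g) with ((u g - v g) + (v g - w g)) by ring. apply Rabs_triang.
Qed.

Lemma l1norm_le_weaken (f : G -> R) c c' : c <= c' -> l1norm_le f c -> l1norm_le f c'.
Proof. intros Hc H l N; specialize (H l N); lra. Qed.

Lemma l1norm_le_comp_injective (f : G -> R) (k : G -> G) c :
  Injective k -> l1norm_le f c -> l1norm_le (fun h => f (k h)) c.
Proof.
  intros Hk H l N. rewrite <- (sum_list_map (fun h => Rabs (f h)) k).
  apply H, Injective_map_NoDup; auto.
Qed.

Lemma left_mul_injective (mul : G -> G -> G) (inv : G -> G) (e : G) (g : G) :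
  is_group mul inv e -> Injective (mul g).
Proof.
  intros [As [Le [_ [Li _]]]] a b E.
  rewrite <- (Le a), <- (Le b), <- (Li g), !As, E; auto.
Qed.

Lemma translate_l1norm_le (mul : G -> G -> G) (inv : G -> G) (e : G) g (u v : G -> R) c :
  is_group mul inv e -> l1norm_le (fun h => u h - v h) c ->
  l1norm_le (fun h => translate mul inv g u h - translate mul inv g v h) c.
Proof.
  intros HG H. unfold translate.
  apply (l1norm_le_comp_injective (fun h => u h - v h)); auto.
  eapply left_mul_injective; eauto.
Qed.

Lemma PG_l1_estimate (p q : G -> R) (l0 : list G) (eta delta : R) :
  in_PG p -> in_PG q -> NoDup l0 ->
  1 - sum_list p l0 <= delta ->
  Rabs (sum_list p l0 - sum_list q l0) < eta ->
  (forall g, In g l0 -> Rabs (p g - q g) < eta) ->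
  l1norm_le (fun h => p h - q h) ((INR (length l0) + 1) * eta + 2 * delta).
Proof.
  intros Hp Hq N0 Hmass Htot Hcoord l Nl.
  rewrite (sum_list_filter _ (memb l0) l).
  set (inside := filter (memb l0) l).
  set (outside := filter (fun g => negb (memb l0 g)) l).
  assert (Hdisj : forall a, In a l0 -> ~ In a outside).
  { intros a Ha Hb; apply filter_In in Hb as [_ Hb].
    apply memb_spec in Ha; rewrite Ha in Hb; discriminate. }
  assert (Nout : NoDup (l0 ++ outside)) by (apply NoDup_app; auto; apply NoDup_filter; auto).
  assert (Bin : sum_list (fun h => Rabs (p h - q h)) inside <= INR (length l0) * eta).
  { apply Rle_trans with (sum_list (fun h => Rabs (p h - q h)) l0).
    - apply sum_list_incl; [intros; apply Rabs_pos | apply NoDup_filter; auto |].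
      intros g Hg; apply filter_In in Hg as [_ Hg]; apply memb_spec; auto.
    - apply sum_list_bound; intros g Hg; left; auto. }
  assert (Bout : sum_list (fun h => Rabs (p h - q h)) outside
                 <= sum_list p outside + sum_list q outside).
  { rewrite <- sum_list_plus; apply sum_list_le; intros g _.
    destruct Hp as [Hp _], Hq as [Hq _]; specialize (Hp g); specialize (Hq g).
    apply Rabs_le; lra. }
  pose proof (PG_partial_sum_le1 p _ Hp Nout) as Pp; rewrite sum_list_app in Pp.
  pose proof (PG_partial_sum_le1 q _ Hq Nout) as Pq; rewrite sum_list_app in Pq.
  apply Rabs_def2 in Htot. lra.
Qed.

End L1Norm.

Lemma agree_upto_mono M M' x y : (M' <= M)%nat -> agree_upto M x y -> agree_upto M' x y.
Proof. intros Hm H i Hi; apply H; lia. Qed.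

Section NormContinuity.
Context {G : Type}.
Variable b : Cantor -> G -> R.
Hypothesis b_PG : forall x, in_PG (b x).
Hypothesis b_cont : weakstar_continuous b.

(* Pairing with an indicator is a weak*-continuous linear functional. *)
Lemma weakstar_finite_mass x (A : list G) eta : NoDup A -> eta > 0 ->
  exists M, forall y, agree_upto M x y ->
    Rabs (sum_list (b x) A - sum_list (b y) A) < eta.
Proof.
  intros NA He. destruct (b_cont (indicator A) (indicator_in_c0 A) x eta He) as [M HM].
  exists M; intros y Hy; apply (HM y Hy); apply indicator_has_sum; auto.
Qed.

Lemma weakstar_coordinates x (A : list G) eta : eta > 0 ->
  exists M, forall y, agree_upto M x y -> forall g, In g A -> Rabs (b x g - b y g) < eta.
Proof.
  intros He. induction A as [|a A [M IH]].
  - exists 0%nat; intros y _ g [].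
  - destruct (weakstar_finite_mass x [a] eta (NoDup_cons a (in_nil (a := a)) (NoDup_nil G)) He)
      as [Ma Ha].
    exists (Nat.max M Ma). intros y Ay g [<- | Ig].
    + specialize (Ha y (agree_upto_mono _ _ _ _ (Nat.le_max_r _ _) Ay)); simpl in Ha.
      replace (b x a - b y a) with (b x a + 0 - (b y a + 0)) by ring; auto.
    + apply (IH y); auto. apply (agree_upto_mono (Nat.max M Ma)); auto; lia.
Qed.

Lemma weakstar_l1_continuous x d : d > 0 ->
  exists M, forall y, agree_upto M x y -> l1norm_le (fun h => b x h - b y h) d.
Proof.
  intros Hd.
  destruct (proj2 (b_PG x) (d / 4)) as [l0 [N0 H0]]; [lra|].
  specialize (H0 l0 N0 (incl_refl _)); apply Rabs_def2 in H0.
  set (K := INR (length l0)).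
  assert (HK : 0 <= K) by apply pos_INR.
  set (eta := d / (2 * (K + 1))).
  assert (Heta : eta > 0) by (unfold eta; apply Rdiv_lt_0_compat; lra).
  assert (Keta : (K + 1) * eta = d / 2) by (unfold eta; field; lra).
  destruct (weakstar_finite_mass x l0 eta N0 Heta) as [M0 HM0].
  destruct (weakstar_coordinates x l0 eta Heta) as [M1 HM1].
  exists (Nat.max M0 M1). intros y Ay.
  apply (l1norm_le_weaken _ ((K + 1) * eta + 2 * (d / 4))); [lra|].
  apply PG_l1_estimate; auto; [lra | |].
  - apply HM0, (agree_upto_mono (Nat.max M0 M1)); auto; lia.
  - apply HM1, (agree_upto_mono (Nat.max M0 M1)); auto; lia.
Qed.

End NormContinuity.

Section Compactness.
(* Fact (2), in the form of a fan theorem: if every point x has a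
   neighbourhood (agreement on M_x coordinates) on which a relation Q holds,
   then a single M works for all pairs.  Arguing by contradiction, we follow
   a branch of the binary tree along which the failure persists at every
   depth (Koenig's lemma); its limit point contradicts the hypothesis. *)
Variable Q : Cantor -> Cantor -> Prop.

Definition set_bit (w : Cantor) (k : nat) (c : bool) : Cantor :=
  fun i => if Nat.eqb i k then c else w i.

(* Q fails at arbitrarily fine scales near the cylinder of w of length k. *)
Definition Bad (k : nat) (w : Cantor) : Prop :=
  forall M, exists y z, agree_upto k w y /\ agree_upto M y z /\ ~ Q y z.

Lemma Bad_step k w : Bad k w -> Bad (S k) (set_bit w k false) \/ Bad (S k) (set_bit w k true).
Proof.
  intros HB. apply NNPP; intro Hn. apply not_or_and in Hn as [H0 H1].
  apply not_all_ex_not in H0 as [M0 H0]. apply not_all_ex_not in H1 as [M1 H1].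
  destruct (HB (Nat.max M0 M1)) as [y [z [A1 [A2 A3]]]].
  assert (Hag : forall c, y k = c -> agree_upto (S k) (set_bit w k c) y).
  { intros c Hc i Hi. unfold set_bit.
    destruct (Nat.eqb_spec i k); [subst; auto | apply A1; lia]. }
  destruct (y k) eqn:E; [apply H1 | apply H0]; exists y, z;
    (split; [apply Hag; auto | split; auto]);
    apply (agree_upto_mono (Nat.max M0 M1)); auto; lia.
Qed.

Fixpoint bad_branch (k : nat) : Cantor :=
  match k with
  | 0 => fun _ => false
  | S k =>
      let w := bad_branch k in
      if excluded_middle_informative (Bad (S k) (set_bit w k false))
      then set_bit w k false else set_bit w k true
  end.

Lemma bad_branch_bad : (forall M, exists y z, agree_upto M y z /\ ~ Q y z) ->
  forall k, Bad k (bad_branch k).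
Proof.
  intros H0 k; induction k; simpl.
  - intros M. destruct (H0 M) as [y [z [A B]]]. exists y, z. split; auto. intros i Hi; lia.
  - destruct (excluded_middle_informative _); auto.
    destruct (Bad_step _ _ IHk); tauto.
Qed.

Lemma bad_branch_stable k m i : (i < k)%nat -> (k <= m)%nat -> bad_branch m i = bad_branch k i.
Proof.
  intros Hi Hm; induction Hm; auto. rewrite <- IHHm. simpl.
  destruct (excluded_middle_informative _); unfold set_bit;
    destruct (Nat.eqb_spec i m); auto; lia.
Qed.

Lemma fan :
  (forall x, exists M, forall y z, agree_upto M x y -> agree_upto M x z -> Q y z) ->
  exists M, forall y z, agree_upto M y z -> Q y z.
Proof.
  intros H. apply NNPP; intro Hn.
  assert (H0 : forall M, exists y z, agree_upto M y z /\ ~ Q y z).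
  { intros M. apply NNPP; intro H1. apply Hn. exists M. intros y z A.
    apply NNPP; intro H2. apply H1. exists y, z; split; auto. }
  set (x := fun i => bad_branch (S i) i).
  destruct (H x) as [M HM].
  destruct (bad_branch_bad H0 M M) as [y [z [A1 [A2 A3]]]].
  assert (Ax : agree_upto M x (bad_branch M)).
  { intros i Hi. unfold x. symmetry. apply bad_branch_stable; lia. }
  apply A3, HM; intros i Hi; rewrite Ax; auto.
  rewrite A1, A2; auto.
Qed.

End Compactness.

Lemma weakstar_uniformly_l1_continuous {G : Type} (b : Cantor -> G -> R) :
  (forall x, in_PG (b x)) -> weakstar_continuous b ->
  forall d, d > 0 -> exists M, forall y z, agree_upto M y z ->
    l1norm_le (fun h => b y h - b z h) d.
Proof.
  intros Hpg Hw d Hd. apply fan. intros x.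
  destruct (weakstar_l1_continuous b Hpg Hw x (d / 2)) as [M HM]; [lra|]. exists M.
  intros y z Ay Az.
  apply (l1norm_le_weaken _ (d / 2 + d / 2)); [lra|].
  apply (l1norm_le_triangle _ (b x)); [apply l1norm_le_sym|]; auto.
Qed.

Section Truncation.
Definition trunc (M : nat) (x : Cantor) : Cantor :=
  fun i => if Nat.ltb i M then x i else false.

Fixpoint truncations (M : nat) : list Cantor :=
  match M with
  | 0 => [fun _ => false]
  | S M => flat_map (fun c => [c; set_bit c M true]) (truncations M)
  end.

Lemma trunc_in_truncations M x : In (trunc M x) (truncations M).
Proof.
  induction M; simpl.
  - left. apply functional_extensionality; intro i; unfold trunc; destruct i; reflexivity.
  - apply in_flat_map. exists (trunc M x). split; auto.
    assert (Hbelow : forall i, i <> M -> trunc (S M) x i = trunc M x i).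
    { intros i Hi; unfold trunc.
      destruct (Nat.ltb_spec i M), (Nat.ltb_spec i (S M)); auto; lia. }
    assert (Hat : trunc (S M) x M = x M).
    { unfold trunc; destruct (Nat.ltb_spec M (S M)); auto; lia. }
    assert (Hzero : trunc M x M = false).
    { unfold trunc; rewrite Nat.ltb_irrefl; auto. }
    destruct (x M) eqn:E; [right|]; left;
      apply functional_extensionality; intro i; unfold set_bit;
      (destruct (Nat.eqb_spec i M) as [->|]; [congruence | rewrite Hbelow; auto]).
Qed.

Lemma trunc_agree M x : agree_upto M x (trunc M x).
Proof. intros i Hi; unfold trunc; destruct (Nat.ltb_spec i M); auto; lia. Qed.

Lemma trunc_eq M x y : agree_upto M x y -> trunc M x = trunc M y.
Proof.
  intros H; apply functional_extensionality; intro i; unfold trunc.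
  destruct (Nat.ltb_spec i M); auto.
Qed.

Context {G : Type}.
Variable b : Cantor -> G -> R.

(* A map factoring through trunc M is locally constant, hence weak*-continuous. *)
Lemma trunc_weakstar_continuous M : weakstar_continuous (fun x => b (trunc M x)).
Proof.
  intros f Hf x eps He. exists M. intros y A s t Hs Ht.
  rewrite (trunc_eq _ _ _ A) in Hs. rewrite (has_sum_unique _ _ _ Hs Ht).
  unfold Rminus; rewrite Rplus_opp_r, Rabs_R0; lra.
Qed.

Lemma trunc_finite_image M : finite_image (fun x => b (trunc M x)).
Proof.
  exists (map b (truncations M)). intro x. exists (b (trunc M x)).
  split; auto using in_map, trunc_in_truncations.
Qed.

End Truncation.

(* Asymptotic invariance survives uniformly vanishing perturbations, because
   translation is an l^1-isometry. *)
Lemma asymptotically_invariant_perturb {G : Type} (mul : G -> G -> G) (inv : G -> G) (e : G)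
  (act : G -> Cantor -> Cantor) (b c : nat -> Cantor -> G -> R) :
  is_group mul inv e ->
  (forall n x, l1norm_le (fun h => c n x h - b n x h) (/ INR (S n))) ->
  asymptotically_invariant mul inv act b -> asymptotically_invariant mul inv act c.
Proof.
  intros HG Hclose Hinv g eps He.
  destruct (Hinv g (eps / 3)) as [N1 HN1]; [lra|].
  destruct (archimed_cor1 (eps / 3)) as [N2 [HN2 HN2']]; [lra|].
  exists (Nat.max N1 N2). intros n Hn x.
  assert (Hsmall : / INR (S n) <= eps / 3).
  { apply Rle_trans with (/ INR N2); [|lra].
    apply Rinv_le_contravar; [apply lt_0_INR; auto | apply le_INR; lia]. }
  apply (l1norm_le_weaken _ (/ INR (S n) + eps / 3 + / INR (S n))); [lra|].
  apply (l1norm_le_triangle _ (b n (act g x))); [|apply l1norm_le_sym, Hclose].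
  apply (l1norm_le_triangle _ (translate mul inv g (b n x))); [|apply HN1; lia].
  apply (translate_l1norm_le mul inv e); auto.
Qed.

Theorem lemma3p3p5 (G : Type) (mul : G -> G -> G) (inv : G -> G) (e : G)
  (act : G -> Cantor -> Cantor)
  (HG : is_group mul inv e) (Hcount : countable G)
  (Hact : is_action mul e act)
  (Hamen : amenable_action mul inv act) :
  exists b : nat -> Cantor -> G -> R,
    (forall n x, in_PG (b n x)) /\
    (forall n, weakstar_continuous (b n)) /\
    (forall n, finite_image (b n)) /\
    asymptotically_invariant mul inv act b.
Proof.
  destruct Hamen as [b [Hpg [Hw Hinv]]].
  assert (Hmod : forall n, exists M, forall y z, agree_upto M y z ->
             l1norm_le (fun h => b n y h - b n z h) (/ INR (S n))).
  { intro n. apply weakstar_uniformly_l1_continuous; auto.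
    apply Rinv_0_lt_compat, lt_0_INR; lia. }
  apply choice in Hmod as [M HM].
  exists (fun n x => b n (trunc (M n) x)). split; [|split; [|split]].
  - intros n x; apply Hpg.
  - intro n; apply trunc_weakstar_continuous.
  - intro n; apply trunc_finite_image.
  - apply (asymptotically_invariant_perturb mul inv e act b); auto.
    intros n x; apply HM; intros i Hi; symmetry; apply trunc_agree; auto.
Qed.
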